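(* Let $A$ be a linearly ordered set. Then for all passable games $G,H$ over $A$, we have $G\lhd H$ or $H\le G$.
   Context: Games over a poset $A$ are defined inductively: for each $a\in A$ there is an atomic game $[a]$, which has no options; and if $L$ and $R$ are non-empty sets of games, then $\{L\mid R\}$ is a composite game with left options $L$ and right options $R$. The relations $\le$ and $\lhd$ are defined by simultaneous recursion: $G\le H$ iff (1) every left option $G^L$ of $G$ satisfies $G^L\lhd H$, (2) every right option $H^R$ of $H$ satisfies $G\lhd H^R$, and (3) if $G$ or $H$ is atomic then $G\lhd H$; and $G\lhd H$ iff (1) some right option $G^R$ of $G$ satisfies $G^R\le H$, or (2) some left option $H^L$ of $H$ satisfies $G\le H^L$, or (3) $G=[a]$, $H=[b]$ are atomic and $a\le b$. A game $G$ is passable if $G\lhd G$ and recursively all its options are passable. *)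

From mathcomp Require Import all_boot all_order.
Set Implicit Arguments. Unset Strict Implicit. Unset Printing Implicit Defensive.
Import Order.TTheory.
Local Open Scope order_scope.

(* A composite game {L | R} is given by two
   nonempty families of games L : I -> game A and R : J -> game A; the set of
   left (resp. right) options is the image of L (resp. R). *)
Inductive game (A : Type) : Type :=
| Atom (a : A)
| Comp (I : Type) (L : I -> game A) (J : Type) (R : J -> game A)
       (neI : inhabited I) (neJ : inhabited J).

Arguments Atom {A} a.

Definition is_atom {A} (G : game A) : Prop :=
  match G with Atom _ => True | _ => False end.

Definition left_opt {A} (X G : game A) : Prop :=
  match G with Atom _ => False | Comp _ L _ _ _ _ => exists i, L i = X end.

Definition right_opt {A} (X G : game A) : Prop :=
  match G with Atom _ => False | Comp _ _ _ R _ _ => exists j, R j = X end.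

Section Rel.
Context {d : Order.disp_t} {A : porderType d}.

(* The relations <= and <| defined by simultaneous (well-founded) recursion,
   presented as a mutual inductive definition (unique fixed point). *)
Inductive game_le : game A -> game A -> Prop :=
| game_le_intro (G H : game A) :
    (forall GL, left_opt GL G -> game_lhd GL H) ->
    (forall HR, right_opt HR H -> game_lhd G HR) ->
    (is_atom G \/ is_atom H -> game_lhd G H) ->
    game_le G H
with game_lhd : game A -> game A -> Prop :=
| game_lhd_R (G H GR : game A) : right_opt GR G -> game_le GR H -> game_lhd G H
| game_lhd_L (G H HL : game A) : left_opt HL H -> game_le G HL -> game_lhd G H
| game_lhd_atom (a b : A) : (a <= b)%O -> game_lhd (Atom a) (Atom b).

Fixpoint passable (G : game A) : Prop :=
  game_lhd G G /\
  match G with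
  | Atom _ => True
  | Comp _ L _ R _ _ => (forall i, passable (L i)) /\ (forall j, passable (R j))
  end.

End Rel.

(* Mixed transitivity (G <| H <= K and G <= H <| K give G <| K, G <= H <= K
   gives G <= K) holds over any poset, by induction on triples of games.  For
   passable G, H with G not <| H, the induction hypothesis on options yields
   every clause of H <= G; the remaining clause H <| G follows from the witness
   of G <| G (or of H <| H) by transitivity, and only when G and H are both
   atoms is the linearity of A needed. *)

From Stdlib Require Import Classical.
From mathcomp Require Import all_boot all_order.
Import Order.TTheory.

Set Implicit Arguments. Unset Strict Implicit.

Definition game_opt {A} (X G : game A) := left_opt X G \/ right_opt X G.

Lemma game_opt_ind A (P : game A -> Prop) :
  (forall G, (forall X, game_opt X G -> P X) -> P G) -> forall G, P G.
Proof.
move=> IH; elim=> [a|I L IHL J R IHR nI nJ]; apply: IH => X; rewrite /game_opt /=.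
- by case.
- by case=> [[i <-]|[j <-]].
Qed.

Section Transitivity.
Context {d : Order.disp_t} {A : porderType d}.

Lemma game_le_inv (G H : game A) : game_le G H ->
  [/\ forall GL, left_opt GL G -> game_lhd GL H,
      forall HR, right_opt HR H -> game_lhd G HR &
      is_atom G \/ is_atom H -> game_lhd G H].
Proof. by case. Qed.

Lemma game_lhd_inv (G H : game A) : game_lhd G H ->
  [\/ exists2 GR, right_opt GR G & game_le GR H,
      exists2 HL, left_opt HL H & game_le G HL |
      exists a b, [/\ G = Atom a, H = Atom b & (a <= b)%O]].
Proof.
case=> [{}G {}H GR rGR leGRH|{}G {}H HL lHL leGHL|a b ab].
- by apply: Or31; exists GR.
- by apply: Or32; exists HL.
- by apply: Or33; exists a, b.
Qed.

Lemma game_le_atom (a b : A) : (a <= b)%O -> game_le (Atom a) (Atom b).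
Proof. by move=> ab; constructor=> //= *; apply: game_lhd_atom. Qed.

Definition game_trans_at (X Y Z : game A) :=
  [/\ game_lhd X Y -> game_le Y Z -> game_lhd X Z,
      game_le X Y -> game_lhd Y Z -> game_lhd X Z &
      game_le X Y -> game_le Y Z -> game_le X Z].

Section TransitivityStep.
Variables X Y Z : game A.
Hypothesis IHX : forall X', game_opt X' X -> game_trans_at X' Y Z.
Hypothesis IHY : forall Y', game_opt Y' Y -> game_trans_at X Y' Z.
Hypothesis IHZ : forall Z', game_opt Z' Z -> game_trans_at X Y Z'.

Lemma game_lhd_le_trans_step : game_lhd X Y -> game_le Y Z -> game_lhd X Z.
Proof.
move=> hXY hYZ; have [hYZL _ hYZA] := game_le_inv hYZ.
case: (game_lhd_inv hXY) => [[XR rXR hle]|[YL lYL hle]|[a [b [eX eY ab]]]].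
- apply: (game_lhd_R rXR).
  by case: (IHX (or_intror rXR)) => _ _; apply.
- case: (IHY (or_introl lYL)) => _ trYL _.
  exact: trYL hle (hYZL _ lYL).
- subst X Y; case: (game_lhd_inv (hYZA (or_introl I))).
  + by case=> GR [].
  + case=> ZL lZL hle; apply: (game_lhd_L lZL).
    by case: (IHZ (or_introl lZL)) => _ _; apply; [apply: game_le_atom|].
  + case=> b' [c [[<-] -> bc]].
    by apply: game_lhd_atom; apply: le_trans bc.
Qed.

Lemma game_le_lhd_trans_step : game_le X Y -> game_lhd Y Z -> game_lhd X Z.
Proof.
move=> hXY hYZ; have [_ hXYR hXYA] := game_le_inv hXY.
case: (game_lhd_inv hYZ) => [[YR rYR hle]|[ZL lZL hle]|[b [c [eY eZ bc]]]].
- by case: (IHY (or_intror rYR)) => trYR _ _; apply: trYR hle; apply: hXYR.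
- apply: (game_lhd_L lZL).
  by case: (IHZ (or_introl lZL)) => _ _; apply.
- subst Y Z; case: (game_lhd_inv (hXYA (or_intror I))).
  + case=> XR rXR hle; apply: (game_lhd_R rXR).
    by case: (IHX (or_intror rXR)) => _ _; apply; last apply: game_le_atom.
  + by case=> GL [].
  + case=> a [b' [-> [eb] ab]]; subst b'.
    by apply: game_lhd_atom; apply: le_trans bc.
Qed.

Lemma game_le_trans_step : game_le X Y -> game_le Y Z -> game_le X Z.
Proof.
move=> hXY hYZ; have [hXYL _ hXYA] := game_le_inv hXY.
have [_ hYZR hYZA] := game_le_inv hYZ.
constructor.
- move=> XL lXL; case: (IHX (or_introl lXL)) => trXL _ _.
  exact: trXL (hXYL _ lXL) hYZ.
- move=> ZR rZR; case: (IHZ (or_intror rZR)) => _ trZR _.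
  exact: trZR hXY (hYZR _ rZR).
- case=> [aX|aZ].
  + exact: game_lhd_le_trans_step (hXYA (or_introl aX)) hYZ.
  + exact: game_le_lhd_trans_step hXY (hYZA (or_intror aZ)).
Qed.

End TransitivityStep.

Lemma game_trans (X Y Z : game A) : game_trans_at X Y Z.
Proof.
elim/game_opt_ind: X Y Z => X IHX Y; elim/game_opt_ind: Y => Y IHY Z.
elim/game_opt_ind: Z => Z IHZ.
have IHX' X' (oX : game_opt X' X) := IHX X' oX Y Z.
have IHY' Y' (oY : game_opt Y' Y) := IHY Y' oY Z.
split; [exact: game_lhd_le_trans_step IHX' IHY' IHZ
       |exact: game_le_lhd_trans_step IHX' IHY' IHZ
       |exact: game_le_trans_step IHX' IHY' IHZ].
Qed.

Lemma game_lhd_le_trans (X Y Z : game A) :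
  game_lhd X Y -> game_le Y Z -> game_lhd X Z.
Proof. by case: (game_trans X Y Z). Qed.

Lemma game_le_lhd_trans (X Y Z : game A) :
  game_le X Y -> game_lhd Y Z -> game_lhd X Z.
Proof. by case: (game_trans X Y Z). Qed.

End Transitivity.

Section Comparison.
Context {d : Order.disp_t} {A : orderType d}.

Definition game_lhd_or_ge (G H : game A) := game_lhd G H \/ game_le H G.

Section ComparisonStep.
Variables G H : game A.
Hypothesis lhdGG : game_lhd G G.
Hypothesis lhdHH : game_lhd H H.
Hypothesis IHG : forall X, game_opt X G -> game_lhd_or_ge X H /\ game_lhd_or_ge H X.
Hypothesis IHH : forall X, game_opt X H -> game_lhd_or_ge G X /\ game_lhd_or_ge X G.
Hypothesis nlhdGH : ~ game_lhd G H.

Lemma lhd_right_opt_of_not_lhd GR : right_opt GR G -> game_lhd H GR.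
Proof.
move=> rGR; case: (IHG (or_intror rGR)) => _ [//|leGRH].
by case: nlhdGH; apply: game_lhd_R rGR leGRH.
Qed.

Lemma left_opt_lhd_of_not_lhd HL : left_opt HL H -> game_lhd HL G.
Proof.
move=> lHL; case: (IHH (or_introl lHL)) => _ [//|leGHL].
by case: nlhdGH; apply: game_lhd_L lHL leGHL.
Qed.

Lemma lhd_of_not_lhd : game_lhd H G.
Proof.
case: (game_lhd_inv lhdGG) => [[GR rGR leGRG]|[GL lGL leGGL]|[a [_ [eG _ _]]]].
- exact: game_lhd_le_trans (lhd_right_opt_of_not_lhd rGR) leGRG.
- case: (IHG (or_introl lGL)) => [[lhdGLH|leHGL] _].
  + by case: nlhdGH; apply: game_le_lhd_trans leGGL lhdGLH.
  + exact: game_lhd_L lGL leHGL.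
case: (game_lhd_inv lhdHH) => [[HR rHR leHRH]|[HL lHL leHHL]|[b [_ [eH _ _]]]].
- case: (IHH (or_intror rHR)) => [[lhdGHR|leHRG] _].
  + by case: nlhdGH; apply: game_lhd_le_trans lhdGHR leHRH.
  + exact: game_lhd_R rHR leHRG.
- exact: game_le_lhd_trans leHHL (left_opt_lhd_of_not_lhd lHL).
subst G H; case/orP: (le_total a b) => [ab|ba]; last exact: game_lhd_atom.
by case: nlhdGH; apply: game_lhd_atom.
Qed.

Lemma le_of_not_lhd : game_le H G.
Proof.
constructor=> [HL|GR|_]; [exact: left_opt_lhd_of_not_lhd
  | exact: lhd_right_opt_of_not_lhd | exact: lhd_of_not_lhd].
Qed.

End ComparisonStep.

Lemma game_lhd_or_ge_step (G H : game A) :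
  game_lhd G G -> game_lhd H H ->
  (forall X, game_opt X G -> game_lhd_or_ge X H /\ game_lhd_or_ge H X) ->
  (forall X, game_opt X H -> game_lhd_or_ge G X /\ game_lhd_or_ge X G) ->
  game_lhd_or_ge G H.
Proof.
move=> lhdGG lhdHH IHG IHH; case: (classic (game_lhd G H)) => [|nlhdGH]; first by left.
by right; apply: le_of_not_lhd.
Qed.

Lemma passable_lhd (G : game A) : passable G -> game_lhd G G.
Proof. by case: G => [a|I L J R nI nJ] []. Qed.

Lemma passable_opt (G X : game A) : passable G -> game_opt X G -> passable X.
Proof.
case: G => [a|I L J R nI nJ] /=; first by move=> _ [].
by move=> [_ [pL pR]] [[i <-]|[j <-]].
Qed.

Lemma passable_lhd_or_ge (G H : game A) : passable G -> passable H ->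
  game_lhd_or_ge G H /\ game_lhd_or_ge H G.
Proof.
elim/game_opt_ind: G H => G IHG H; elim/game_opt_ind: H => H IHH pG pH.
have IHG' X (oX : game_opt X G) := IHG X oX H (passable_opt pG oX) pH.
have IHH' X (oX : game_opt X H) := IHH X oX pG (passable_opt pH oX).
have lhdGG := passable_lhd pG; have lhdHH := passable_lhd pH.
split; first exact: game_lhd_or_ge_step.
by apply: game_lhd_or_ge_step => // X oX; apply/and_comm; [apply: IHH'|apply: IHG'].
Qed.

End Comparison.

Theorem lemma7p2 (d : Order.disp_t) (A : orderType d) (G H : game A) :
  passable G -> passable H -> game_lhd G H \/ game_le H G.
Proof. by move=> pG pH; case: (passable_lhd_or_ge pG pH). Qed.
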